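(* Let $X$ be an $\omega$ type $P$-space. Then $\Sigma\mathcal O(X)$ is sober.
   Context: $\mathcal O(X)$ is the lattice of open subsets of $X$ ordered by inclusion, and $\Sigma\mathcal O(X)$ is this lattice with its Scott topology (a set $U$ is Scott open iff it is an upper set and for every directed $D$, $\bigvee D\in U$ implies $D\cap U\neq\emptyset$). A space is an $\omega$ type space if it has a subbase consisting of countable subsets; it is a $P$-space if countable intersections of open sets are open. A $T_0$ space is sober if every irreducible closed set equals $\overline{\{x\}}$ for some point $x$. *)

From HB Require Import structures.
From mathcomp Require Import all_boot all_order.
From mathcomp Require Import boolp classical_sets cardinality topology.
Set Implicit Arguments. Unset Strict Implicit. Unset Printing Implicit Defensive.
Local Open Scope classical_set_scope.

(* A topology on a type T given by its family of open sets. *)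
Section GenTop.
Variables (T : Type) (op : set T -> Prop).

Definition gclosed (C : set T) : Prop := op (~` C).

Definition gclosure (A : set T) : set T :=
  fun x => forall C, gclosed C -> A `<=` C -> C x.

Definition gT0 : Prop :=
  forall x y : T, (forall U, op U -> (U x <-> U y)) -> x = y.

Definition girreducible (C : set T) : Prop :=
  C !=set0 /\
  forall A B, gclosed A -> gclosed B -> C `<=` A `|` B -> C `<=` A \/ C `<=` B.

Definition gsober : Prop :=
  gT0 /\ forall C, gclosed C -> girreducible C ->
    exists x, C = gclosure [set x].
End GenTop.

Definition OX (X : topologicalType) := {U : set X | open U}.

Definition OX_le (X : topologicalType) (U V : OX X) : Prop :=
  proj1_sig U `<=` proj1_sig V.

Definition OX_directed (X : topologicalType) (D : set (OX X)) : Prop :=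
  D !=set0 /\
  forall U V, D U -> D V -> exists W, D W /\ OX_le U W /\ OX_le V W.

Definition OX_join (X : topologicalType) (D : set (OX X)) : set X :=
  \bigcup_(U in D) proj1_sig U.

Definition scott_open (X : topologicalType) (S : set (OX X)) : Prop :=
  (forall U V, S U -> OX_le U V -> S V) /\
  (forall D, OX_directed D ->
     forall J : OX X, proj1_sig J = OX_join D -> S J ->
     exists U, D U /\ S U).

(* omega type: a subbase consisting of countable sets *)
Definition omega_type (X : topologicalType) : Prop :=
  exists B : set (set X),
    (forall A, B A -> open A /\ countable A) /\
    (forall U : set X, open U -> forall x, U x ->
       exists F : set (set X), finite_set F /\ F `<=` B /\
         (\bigcap_(A in F) A) x /\ (\bigcap_(A in F) A) `<=` U).

Definition P_space (X : topologicalType) : Prop :=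
  forall U : nat -> set X, (forall n, open (U n)) -> open (\bigcap_n U n).

(** Every point of an omega type P-space has a least open neighbourhood: if
    x lies in a countable subbasic open set A, intersect A with one open set
    around x avoiding y for each of the countably many y in A that can be
    separated from x.  In O(X), the least open neighbourhood m_x of x is a
    compact element (the up-set of m_x is Scott open), so every open set is
    the directed union of the compact opens below it.  Given an irreducible
    Scott-closed C, irreducibility makes the compact opens below members of
    C a directed family; its union is the union s of C, so s lies in C, and
    C is the Scott closure of s. *)

From mathcomp Require Import all_boot all_order.
From mathcomp Require Import boolp classical_sets cardinality topology.

Set Implicit Arguments.
Unset Strict Implicit.
Unset Printing Implicit Defensive.
Local Open Scope classical_set_scope.

Lemma girreducible_meet (T : Type) (op : set T -> Prop) (C S1 S2 : set T) :
  girreducible op C -> op S1 -> op S2 ->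
  C `&` S1 !=set0 -> C `&` S2 !=set0 -> C `&` (S1 `&` S2) !=set0.
Proof.
move=> [_ Cirr] oS1 oS2 [c1 [Cc1 S1c1]] [c2 [Cc2 S2c2]].
apply: contrapT => noC12.
have cS1 : gclosed op (~` S1) by rewrite /gclosed setCK.
have cS2 : gclosed op (~` S2) by rewrite /gclosed setCK.
have C_cover : C `<=` ~` S1 `|` ~` S2.
  move=> c Cc; apply: contrapT => /not_orP[/contrapT S1c /contrapT S2c].
  by apply: noC12; exists c.
by have [/(_ c1 Cc1)|/(_ c2 Cc2)] := Cirr _ _ cS1 cS2 C_cover.
Qed.

Section LeastOpenNeighbourhood.
Variable X : topologicalType.

Definition least_open_nbhd (x : X) (m : set X) : Prop :=
  open m /\ m x /\ forall U, open U -> U x -> m `<=` U.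

Lemma P_space_bigcap_countable (I : Type) (D : set I) (F : I -> set X) :
  P_space X -> countable D -> (forall i, D i -> open (F i)) ->
  open (\bigcap_(i in D) F i).
Proof.
move=> HP /countable_injP[f finj] oF.
(* f is injective on D, so each G n is an intersection of at most one F i. *)
pose G n := \bigcap_(i in [set i | D i /\ f i = n]) F i.
have -> : \bigcap_(i in D) F i = \bigcap_n G n.
  rewrite eqEsubset; split=> [x Fx n _ i [Di _]|x Gx i Di]; first exact: Fx.
  by apply: (Gx (f i)).
apply: HP => n; rewrite /G.
have [[i [Di fi]]|nD] := pselect (exists i, D i /\ f i = n); last first.
  suff -> : [set i | D i /\ f i = n] = set0.
    by rewrite bigcap_set0; exact: openT.
  by rewrite -subset0 => i Di; apply: nD; exists i.
suff -> : [set i | D i /\ f i = n] = [set i] by rewrite bigcap_set1; exact: oF.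
rewrite eqEsubset; split=> [j [Dj fj]|_ ->] //.
by apply: finj; rewrite ?inE //; rewrite fi fj.
Qed.

Lemma P_space_least_open_nbhd (A : set X) (x : X) :
  P_space X -> open A -> countable A -> A x -> exists m, least_open_nbhd x m.
Proof.
move=> HP oA cA Ax.
have separating (y : X) : exists V, open V /\ V x /\
    (V y -> forall U, open U -> U x -> U y).
  have [[V [oV [Vx nVy]]]|nV] :=
    pselect (exists V, open V /\ V x /\ ~ V y).
    by exists V; do 2!split=> //.
  exists setT; split; first exact: openT.
  split=> // _ U oU Ux; apply: contrapT => nUy.
  by apply: nV; exists U.
have [V HV] := choice separating.
exists (A `&` \bigcap_(y in A) V y); split.
  apply: openI => //; apply: P_space_bigcap_countable => // y _.
  exact: (HV y).1.
split; first by split=> // y _; exact: (HV y).2.1.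
by move=> U oU Ux y [Ay /(_ y Ay) Vyy]; exact: (HV y).2.2.
Qed.

Lemma omega_P_space_least_open_nbhd (x : X) :
  omega_type X -> P_space X -> exists m, least_open_nbhd x m.
Proof.
move=> [B [HB Hsub]] HP.
have [[A [BA Ax]]|nA] := pselect (exists A, B A /\ A x).
  by have [oA cA] := HB A BA; exact: (P_space_least_open_nbhd HP oA cA Ax).
(* Only the empty family of subbasic sets contains x, so X is its least
   open neighbourhood. *)
exists setT; split; first exact: openT.
split=> // U oU Ux.
have [F [_ [FB [Fx FU]]]] := Hsub U oU x Ux.
move=> y _; apply: FU => A FA.
by exfalso; apply: nA; exists A; split; [exact: FB|exact: Fx].
Qed.

End LeastOpenNeighbourhood.

Section ScottTopology.
Variable X : topologicalType.

Local Notation scott_open := (@scott_open X).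
Local Notation scott_closed := (gclosed scott_open).

Lemma OX_le_trans (U V W : OX X) : OX_le U V -> OX_le V W -> OX_le U W.
Proof. by move=> UV VW z /UV /VW. Qed.

Lemma OX_le_anti (U V : OX X) : OX_le U V -> OX_le V U -> U = V.
Proof.
by case: U V => [U oU] [V oV] UV VU; apply: eq_exist; rewrite eqEsubset.
Qed.

Lemma scott_open_not_le (b : OX X) : scott_open (fun W => ~ OX_le W b).
Proof.
split=> [U V nUb UV Vb|D _ J JD nJb]; first exact/nUb/(OX_le_trans UV).
apply: contrapT => nD; apply: nJb; rewrite /OX_le JD => z [U DU Uz].
apply: contrapT => nbz; apply: nD; exists U; split=> // Ub.
exact/nbz/Ub.
Qed.

Lemma scott_closed_le (b : OX X) : scott_closed (fun W => OX_le W b).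
Proof. exact: scott_open_not_le. Qed.

Lemma scott_closed_down (C : set (OX X)) (a b : OX X) :
  scott_closed C -> C b -> OX_le a b -> C a.
Proof.
move=> [Cup _] Cb ab; apply: contrapT => nCa.
exact: Cup a b nCa ab Cb.
Qed.

Lemma scott_closed_join (C D : set (OX X)) (J : OX X) :
  scott_closed C -> OX_directed D -> D `<=` C ->
  proj1_sig J = OX_join D -> C J.
Proof.
move=> [_ Cjoin] dirD DC JD; apply: contrapT => nCJ.
by have [U [/DC CU []]] := Cjoin D dirD J JD nCJ.
Qed.

Lemma scott_specialization (a b : OX X) :
  (forall S, scott_open S -> S a -> S b) -> OX_le a b.
Proof.
move=> spec; apply: contrapT => nab.
by apply: (spec _ (scott_open_not_le b) nab).
Qed.

Lemma scott_T0 : gT0 scott_open.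
Proof.
move=> a b Hab.
by apply: OX_le_anti; apply: scott_specialization => S oS /(Hab S oS).
Qed.

Lemma scott_closure1 (s : OX X) :
  gclosure scott_open [set s] = (fun W => OX_le W s).
Proof.
rewrite eqEsubset; split=> [c cs|c cs C Ccl sC].
  by apply: (cs (fun W => OX_le W s)); [exact: scott_closed_le|move=> _ ->].
exact: scott_closed_down Ccl (sC s erefl) cs.
Qed.

Definition OX_compact (U : OX X) : Prop := scott_open (fun W => OX_le U W).

Lemma OX_compactP (U : OX X) :
  (forall D J, OX_directed D -> proj1_sig J = OX_join D -> OX_le U J ->
     exists V, D V /\ OX_le U V) ->
  OX_compact U.
Proof.
move=> Ucpt; split=> [V W UV VW|D dirD J JD UJ]; first exact: OX_le_trans UV VW.
exact: Ucpt D J dirD JD UJ.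
Qed.

Definition OX_set0 : OX X := exist _ set0 open0.

Definition OX_setU (U V : OX X) : OX X :=
  exist _ _ (openU (proj2_sig U) (proj2_sig V)).

Definition OX_sup (C : set (OX X)) : OX X :=
  exist _ (OX_join C) (bigcup_open (fun U _ => proj2_sig U)).

Lemma OX_compact0 : OX_compact OX_set0.
Proof. by apply: OX_compactP => D J [[V DV] _] _ _; exists V; split=> // z. Qed.

Lemma OX_compactU (U V : OX X) :
  OX_compact U -> OX_compact V -> OX_compact (OX_setU U V).
Proof.
move=> [_ Ucpt] [_ Vcpt]; apply: OX_compactP => D J dirD JD UVJ.
have [U' [DU' UU']] := Ucpt D dirD J JD (fun z Uz => UVJ z (or_introl Uz)).
have [V' [DV' VV']] := Vcpt D dirD J JD (fun z Vz => UVJ z (or_intror Vz)).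
have [W [DW [U'W V'W]]] := dirD.2 U' V' DU' DV'.
by exists W; split=> // z [/UU'/U'W|/VV'/V'W].
Qed.

Lemma least_open_nbhd_compact (x : X) (U : OX X) :
  least_open_nbhd x (proj1_sig U) -> OX_compact U.
Proof.
move=> [_ [Ux Umin]]; apply: OX_compactP => D J _ JD UJ.
have := UJ x Ux; rewrite JD => -[V DV Vx].
by exists V; split=> //; apply: Umin => //; exact: proj2_sig V.
Qed.

Definition compact_below (C : set (OX X)) : set (OX X) :=
  fun U => OX_compact U /\ exists2 c, C c & OX_le U c.

Lemma compact_below_directed (C : set (OX X)) :
  girreducible scott_open C -> OX_directed (compact_below C).
Proof.
move=> Cirr; split.
  have [c Cc] := Cirr.1.
  by exists OX_set0; split; [exact: OX_compact0|exists c => // z].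
move=> U V [cptU [cu Ccu Ucu]] [cptV [cv Ccv Vcv]].
have [c [Cc [Uc Vc]]] := girreducible_meet Cirr cptU cptV
  (ex_intro _ cu (conj Ccu Ucu)) (ex_intro _ cv (conj Ccv Vcv)).
exists (OX_setU U V); split; last by split=> z zU; [left|right].
split; first exact: OX_compactU.
by exists c => // z [/Uc|/Vc].
Qed.

Lemma compact_below_join (C : set (OX X)) :
  (forall x : X, exists m, least_open_nbhd x m) ->
  OX_join (compact_below C) = OX_join C.
Proof.
move=> least; rewrite eqEsubset.
split=> [z [U [_ [c Cc Uc]] Uz]|z [c Cc cz]].
  by exists c => //; exact: Uc.
have [m lm] := least z; have [om [mz mmin]] := lm.
exists (exist _ m om) => //; split.
  exact: (least_open_nbhd_compact (U := exist _ m om) lm).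
by exists c => //; apply: mmin => //; exact: proj2_sig c.
Qed.

Theorem scott_sober_of_least_open_nbhd :
  (forall x : X, exists m, least_open_nbhd x m) -> gsober scott_open.
Proof.
move=> least; split=> [|C Ccl Cirr]; first exact: scott_T0.
have C_sup : C (OX_sup C).
  apply: (scott_closed_join Ccl (compact_below_directed Cirr)).
    by move=> U [_ [c Cc Uc]]; exact: scott_closed_down Ccl Cc Uc.
  by rewrite compact_below_join.
exists (OX_sup C); rewrite scott_closure1 eqEsubset.
split=> [c Cc z cz|c]; first by exists c.
exact: scott_closed_down.
Qed.

End ScottTopology.

Theorem corollary4p6 (X : topologicalType) :
  omega_type X -> P_space X -> gsober (@scott_open X).
Proof.
move=> omegaX PX; apply: scott_sober_of_least_open_nbhd => x.
exact: omega_P_space_least_open_nbhd.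
Qed.
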